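(* Let $G$ be a finite graph, $k$ a positive integer, $c$ a $k$-colouring of $G$ and $u\in V(G)$. Then $D_c$ is an independent set of $\mathcal{K}_k(G)$, and no colouring in $D_c$ is adjacent in $\mathcal{K}_k(G)$ to a colouring in $C_{c,u}$.
   Context: A $k$-colouring of $G$ is a map $c:V(G)\to\{1,\dots,k\}$ with $c(x)\neq c(y)$ for every edge $xy$. A Kempe swap from $c$: choose distinct colours $i,j$ and a connected component $H$ of the subgraph of $G$ induced by $c^{-1}(\{i,j\})$, and exchange colours $i,j$ on $H$; it is trivial if it changes the colour of exactly one vertex. $\mathcal{K}_k(G)$ has as vertices all $k$-colourings, two distinct colourings adjacent iff one is obtained from the other by a single Kempe swap. $C_{c,u}$ is the set of $k$-colourings differing from $c$ exactly at $u$; $D_c$ is the set of neighbours of $c$ in $\mathcal{K}_k(G)$ obtained from $c$ by a non-trivial Kempe swap (i.e. differing from $c$ at at least two vertices). *)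

(* A finite simple graph is a symmetric irreflexive relation
   e on a finType T. *)
From mathcomp Require Import all_boot.
Set Implicit Arguments. Unset Strict Implicit. Unset Printing Implicit Defensive.

Section Kempe.
Variables (T : finType) (e : rel T) (k : nat).

Definition colouring := {ffun T -> 'I_k}.

Definition proper_col (c : colouring) : bool :=
  [forall x, forall y, e x y ==> (c x != c y)].

Definition in2 (c : colouring) (i j : 'I_k) (x : T) : bool :=
  (c x == i) || (c x == j).
Definition krel (c : colouring) (i j : 'I_k) : rel T :=
  [rel x y | [&& e x y, in2 c i j x & in2 c i j y]].

(* connected component of v in the induced subgraph (v must be in it) *)
Definition kcomp (c : colouring) (i j : 'I_k) (v : T) : {set T} :=
  [set w | connect (krel c i j) v w].

Definition swap_on (c : colouring) (i j : 'I_k) (H : {set T}) : colouring :=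
  [ffun x => if x \in H then (if c x == i then j else i) else c x].

Definition kempe_step (c d : colouring) : Prop :=
  exists i j : 'I_k, i != j /\ exists v : T, in2 c i j v /\
    d = swap_on c i j (kcomp c i j v).

Definition kadj (c d : colouring) : Prop :=
  [/\ proper_col c, proper_col d, c != d & (kempe_step c d \/ kempe_step d c)].

Definition Cset (c : colouring) (u : T) (d : colouring) : Prop :=
  [/\ proper_col d, d u != c u & forall x, x != u -> d x = c x].

Definition Dset (c : colouring) (d : colouring) : Prop :=
  [/\ kadj c d, kempe_step c d & 2 <= #|[set x | c x != d x]|].

End Kempe.

(* A Kempe swap from X to Y is determined by its colour pair {p, q} and its
   support K = {x | X x != Y x}, a component of the {p, q}-subgraph; this
   subgraph is the same for X and for Y, so the swap can be undone. If a vertex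
   changed by one swap is restored by the next one, both swaps use the same
   pair, and two swaps with the same pair on the same subgraph whose supports
   meet have the same support.
   For d1, d2 in D_c, a bichromatic edge inside each support forces the swaps
   c -> d1, c -> d2 and d1 -> d2 to use a single pair; the supports of the first
   two are disjoint (otherwise d1 = d2), yet the support of d1 -> d2 meets both
   of them, hence equals both. For f in C_{c,u}, the swap c -> d changes a
   vertex w != u which f restores, so d -> f undoes c -> d and f = c. *)
From mathcomp Require Import all_boot.
Set Implicit Arguments. Unset Strict Implicit. Unset Printing Implicit Defensive.

Section SamePair.
Variable k : nat.
Implicit Types i j a b x y : 'I_k.

Definition same_pair i j x y : bool :=
  ((x == i) && (y == j)) || ((x == j) && (y == i)).

Lemma same_pairC i j x y : same_pair i j x y -> same_pair i j y x.
Proof.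
by rewrite /same_pair => /orP[/andP[/eqP-> /eqP->]|/andP[/eqP-> /eqP->]];
  rewrite !eqxx ?orbT.
Qed.

Lemma same_pair_sym i j x y : same_pair i j x y -> same_pair x y i j.
Proof.
by rewrite /same_pair => /orP[/andP[/eqP-> /eqP->]|/andP[/eqP-> /eqP->]];
  rewrite !eqxx ?orbT.
Qed.

Lemma same_pair_trans i j a b x y :
  same_pair i j a b -> same_pair a b x y -> same_pair i j x y.
Proof.
rewrite /same_pair => /orP[/andP[/eqP-> /eqP->]|/andP[/eqP-> /eqP->]] //.
by rewrite orbC.
Qed.

Lemma same_pair_inj i j x y1 y2 :
  same_pair i j x y1 -> same_pair i j x y2 -> y1 = y2.
Proof.
rewrite /same_pair => /orP[/andP[/eqP-> /eqP->]|/andP[/eqP-> /eqP->]]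
  /orP[/andP[/eqP E /eqP->]|/andP[/eqP E /eqP->]] //; by rewrite E.
Qed.

Lemma same_pair_mem i j x y : same_pair i j x y -> (x == i) || (x == j).
Proof.
by rewrite /same_pair => /orP[/andP[/eqP-> _]|/andP[/eqP-> _]];
  rewrite eqxx ?orbT.
Qed.

Lemma same_pair_intro i j x y :
  x != y -> (x == i) || (x == j) -> (y == i) || (y == j) -> same_pair i j x y.
Proof.
rewrite /same_pair => xy /orP[/eqP ?|/eqP ?] /orP[/eqP ?|/eqP ?]; subst;
  rewrite ?eqxx ?orbT //; by rewrite eqxx in xy.
Qed.

Lemma same_pair_in2 (T : finType) (X : colouring T k) i j a b :
  same_pair i j a b -> in2 X i j =1 in2 X a b.
Proof.
rewrite /same_pair /in2 => /orP[/andP[/eqP-> /eqP->]|/andP[/eqP-> /eqP->]] x //.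
by rewrite orbC.
Qed.

End SamePair.

Section KempeSwap.
Variables (T : finType) (e : rel T) (k : nat).
Hypothesis e_sym : symmetric e.
Implicit Types X Y Z : colouring T k.

Record kswap X Y (p q : 'I_k) (K : {set T}) : Prop := KSwap {
  kswap_support : forall x, (x \in K) = (X x != Y x);
  kswap_pair : forall x, x \in K -> same_pair p q (X x) (Y x);
  kswap_comp : forall x y, x \in K -> (y \in K) = connect (krel e X p q) x y }.

Lemma kswap_out X Y p q K x : kswap X Y p q K -> x \notin K -> X x = Y x.
Proof. by case=> -> _ _ /negbNE/eqP. Qed.

Lemma kswap_mem X Y p q K x : kswap X Y p q K -> x \in K -> in2 X p q x.
Proof. by move=> S /(kswap_pair S)/same_pair_mem. Qed.

Lemma kswap_setE X Y p q K : kswap X Y p q K -> [set x | X x != Y x] = K.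
Proof. by move=> S; apply/setP => x; rewrite inE (kswap_support S). Qed.

Lemma krel_eq X Y (p q r s : 'I_k) :
  in2 X p q =1 in2 Y r s -> krel e X p q =2 krel e Y r s.
Proof. by move=> E x y; rewrite /krel /= !E. Qed.

Lemma kswap_in2 X Y p q K : kswap X Y p q K -> in2 X p q =1 in2 Y p q.
Proof.
move=> S x; rewrite /in2.
case: (boolP (x \in K)) => [xK | /(kswap_out S) -> //].
have P := kswap_pair S xK.
by rewrite (same_pair_mem P) (same_pair_mem (same_pairC P)).
Qed.

Lemma kswap_sym X Y p q K : kswap X Y p q K -> kswap Y X p q K.
Proof.
move=> S; have E := kswap_in2 S; case: S => HK HP Hc; split.
- by move=> x; rewrite HK eq_sym.
- by move=> x /HP /same_pairC.
- by move=> x y xK; rewrite (Hc _ _ xK); apply/eq_connect/krel_eq.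
Qed.

Lemma connect_krel_in2 X i j v x :
  in2 X i j v -> connect (krel e X i j) v x -> in2 X i j x.
Proof.
move=> iv /connectP[s pth ->]; elim: s v iv pth => //= y s IH v _.
by case/andP=> /and3P[_ _ iny]; apply: IH.
Qed.

Lemma kempe_stepP X Y :
  kempe_step e X Y -> exists p q K, kswap X Y p q K.
Proof.
move=> [i [j [ij [v [iv ->]]]]]; exists i, j, (kcomp e X i j v).
have in2K x : x \in kcomp e X i j v -> in2 X i j x.
  by rewrite inE; apply: connect_krel_in2.
have ji : j != i by rewrite eq_sym.
split => // [x | x xK | x y].
- rewrite ffunE; case: ifP => [/in2K | _]; last by rewrite eqxx.
  by case/orP=> /eqP->; rewrite ?eqxx ?(negbTE ji) ?ij ?ji.
- rewrite ffunE xK /same_pair.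
  by case/orP: (in2K x xK) => /eqP->; rewrite eqxx ?(negbTE ji) !eqxx ?orbT.
- have krel_sym : connect_sym (krel e X i j).
    apply: sym_connect_sym => x' y'; rewrite /krel /= e_sym.
    by case: (in2 X i j x'); case: (in2 X i j y'); rewrite ?andbF ?andbT.
  by rewrite !inE => vx; apply: same_connect.
Qed.

Lemma kswap_same_comp X X' Y Y' i j p q H K x :
  kswap X Y i j H -> kswap X' Y' p q K -> in2 X i j =1 in2 X' p q ->
  x \in H -> x \in K -> H = K.
Proof.
move=> SH SK E xH xK; apply/setP => y.
by rewrite (kswap_comp SH y xH) (kswap_comp SK y xK) (eq_connect (krel_eq E)).
Qed.

Lemma kswap_inj X Y Z i j a b H :
  kswap X Y i j H -> kswap X Z a b H -> same_pair i j a b -> Y = Z.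
Proof.
move=> SY SZ P; apply/ffunP => x; case: (boolP (x \in H)) => xH.
  apply: same_pair_inj (kswap_pair SY xH) _.
  exact: same_pair_trans P (kswap_pair SZ xH).
by rewrite -(kswap_out SY xH) (kswap_out SZ xH).
Qed.

Lemma kswap_pair_back X Y Z i j p q H K x :
  kswap X Y i j H -> kswap Y Z p q K -> x \in H -> Z x = X x ->
  same_pair i j p q /\ x \in K.
Proof.
move=> SH SK xH ZX.
have xK : x \in K by rewrite (kswap_support SK) ZX eq_sym -(kswap_support SH).
split=> //; apply: same_pair_trans (kswap_pair SH xH) _.
by apply/same_pair_sym/same_pairC; rewrite -ZX; apply: (kswap_pair SK xK).
Qed.

Lemma kswap_bichromatic X Y i j H :
  proper_col e X -> kswap X Y i j H -> 1 < #|H| ->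
  exists x y, [/\ x \in H, y \in H & X x != X y].
Proof.
move=> pX S /card_gt1P[v [w [vH wH vw]]].
move: wH; rewrite (kswap_comp S w vH) => /connectP[[|z s] /=].
  by move=> _ /eqP; rewrite eq_sym (negbTE vw).
case/andP=> /and3P[evz inv inz] _ _.
have zH : z \in H by rewrite (kswap_comp S z vH); apply: connect1; apply/and3P.
exists v, z; split=> //.
by move/forallP: pX => /(_ v)/forallP/(_ z)/implyP/(_ evz).
Qed.

Lemma kswap_pair_cases X Y Z i j a b p q H H' K x y :
  kswap X Y i j H -> kswap X Z a b H' -> kswap Y Z p q K ->
  x \in H -> y \in H -> X x != X y ->
  same_pair i j a b \/ same_pair i j p q.
Proof.
move=> S S' SK xH yH xy.
case: (boolP (x \in H')) => [xH' | /(kswap_out S') ZX]; last first.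
  by right; case: (kswap_pair_back S SK xH (esym ZX)).
case: (boolP (y \in H')) => [yH' | /(kswap_out S') ZY]; last first.
  by right; case: (kswap_pair_back S SK yH (esym ZY)).
have Pij := same_pair_intro xy (kswap_mem S xH) (kswap_mem S yH).
have Pab := same_pair_intro xy (kswap_mem S' xH') (kswap_mem S' yH').
by left; apply: same_pair_trans Pij (same_pair_sym Pab).
Qed.

Lemma kadj_kswap X Y : kadj e X Y -> exists p q K, kswap X Y p q K.
Proof.
case=> _ _ _ [/kempe_stepP // | /kempe_stepP[p [q [K S]]]].
by exists p, q, K; apply: kswap_sym.
Qed.

Lemma nontrivial_kswaps_eq c d1 d2 i j a b p q H1 H2 K :
  proper_col e c -> kswap c d1 i j H1 -> kswap c d2 a b H2 ->
  kswap d1 d2 p q K -> 1 < #|H1| -> 1 < #|H2| -> d1 = d2.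
Proof.
move=> pc S1 S2 SK n1 n2.
have [x1 [y1 [x1H y1H cxy1]]] := kswap_bichromatic pc S1 n1.
have [x2 [y2 [x2H y2H cxy2]]] := kswap_bichromatic pc S2 n2.
have Pab : same_pair i j a b.
  case: (kswap_pair_cases S1 S2 SK x1H y1H cxy1) => // Pij.
  have := kswap_pair_cases S2 S1 (kswap_sym SK) x2H y2H cxy2.
  case=> [/same_pair_sym // | Pab].
  exact: same_pair_trans Pij (same_pair_sym Pab).
have meet_eq z : z \in H1 -> z \in H2 -> d1 = d2.
  move=> zH1 zH2.
  have H12 := kswap_same_comp S1 S2 (same_pair_in2 c Pab) zH1 zH2.
  by rewrite -H12 in S2; apply: kswap_inj S1 S2 Pab.
case: (boolP (x1 \in H2)) => [/(meet_eq x1 x1H) // | x1H2].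
case: (boolP (x2 \in H1)) => [x2H1 | x2H1]; first exact: meet_eq x2H1 x2H.
have [Ppq x1K] := kswap_pair_back S1 SK x1H (esym (kswap_out S2 x1H2)).
have [_ x2K] :=
  kswap_pair_back S2 (kswap_sym SK) x2H (esym (kswap_out S1 x2H1)).
have E : in2 c i j =1 in2 d1 p q.
  by move=> x; rewrite (kswap_in2 S1) (same_pair_in2 _ Ppq).
by move: x2H1; rewrite (kswap_same_comp S1 SK E x1H x1K) x2K.
Qed.

Lemma nontrivial_kswap_undone c d f i j p q H K u :
  kswap c d i j H -> kswap d f p q K -> 1 < #|H| ->
  (forall x, x != u -> f x = c x) -> f = c.
Proof.
move=> S SK /card_gt1P[x [y [xH yH xy]]] fc.
have [w wH wu] : exists2 w, w \in H & w != u.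
  case: (eqVneq x u) => [xu | xu]; last by exists x.
  by exists y => //; rewrite -xu eq_sym.
have [Ppq wK] := kswap_pair_back S SK wH (fc w wu).
have E : in2 c i j =1 in2 d p q.
  by move=> z; rewrite (kswap_in2 S) (same_pair_in2 _ Ppq).
have HK := kswap_same_comp S SK E wH wK.
by rewrite HK in S; rewrite (kswap_inj (kswap_sym S) SK Ppq).
Qed.

End KempeSwap.

Theorem lemma3p2 (T : finType) (e : rel T) (k : nat)
  (e_sym : symmetric e) (e_irr : irreflexive e) (k_pos : 0 < k)
  (c : colouring T k) (c_proper : proper_col e c) (u : T) :
  (forall d1 d2 : colouring T k,
     Dset e c d1 -> Dset e c d2 -> ~ kadj e d1 d2) /\
  (forall d f : colouring T k,
     Dset e c d -> Cset e c u f -> ~ kadj e d f).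
Proof.
split.
  move=> d1 d2 [_ st1 n1] [_ st2 n2] adj; have [_ _ d12 _] := adj.
  have [i [j [H1 S1]]] := kempe_stepP e_sym st1.
  have [a [b [H2 S2]]] := kempe_stepP e_sym st2.
  have [p [q [K SK]]] := kadj_kswap e_sym adj.
  rewrite (kswap_setE S1) in n1; rewrite (kswap_setE S2) in n2.
  by move/eqP: d12; apply; apply: nontrivial_kswaps_eq c_proper S1 S2 SK n1 n2.
move=> d f [_ st n] [_ fu fc] /(kadj_kswap e_sym)[p [q [K SK]]].
have [i [j [H S]]] := kempe_stepP e_sym st.
rewrite (kswap_setE S) in n.
by move/eqP: fu; apply; rewrite (nontrivial_kswap_undone S SK n fc).
Qed.
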